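(* Let $\mathcal{K}=(\mathcal{R},\mathcal{T})$ be an ME-consistent $\mathcal{ALCP}$ knowledge base over $\mathcal{L}$, $C,D$ concepts, and $\kappa\in\mathcal{L}$ with $P^{ME}_{\mathcal{R}}(\kappa)>0$. Then $$\mathcal{B}^{c}_{\mathcal{K}}(C\sqsubseteq D\mid\kappa)=1-\frac{\sum_{w\in\mathrm{Int}(\mathcal{L}),\ C \text{ is strongly non-subsumed by } D \text{ w.r.t. } \mathcal{T}_w,\ w\models\kappa}P^{ME}_{\mathcal{R}}(w)}{P^{ME}_{\mathcal{R}}(\kappa)}.$$
   Context: $\mathcal{L}$ is a propositional language over a finite set of variables; $\mathrm{Int}(\mathcal{L})$ is the set of truth assignments. A probability distribution over $\mathcal{L}$ is $P:\mathrm{Int}(\mathcal{L})\to[0,1]$ summing to $1$, with $P(\phi)=\sum_{v\models\phi}P(v)$. A probabilistic constraint is $c_0+\sum_{i=1}^k c_i\,\mathsf{p}(\phi_i)\ge 0$ ($c_i\in\mathbb{R}$, $\phi_i\in\mathcal{L}$), satisfied by $P$ iff $c_0+\sum_ic_iP(\phi_i)\ge0$; $\mathrm{Mod}(\mathcal{R})$ is the set of distributions satisfying all constraints in $\mathcal{R}$; for consistent $\mathcal{R}$, $P^{ME}_{\mathcal{R}}$ is the unique maximizer in $\mathrm{Mod}(\mathcal{R})$ of $H(P)=-\sum_vP(v)\log P(v)$. Concepts: $C::=A\mid\neg C\mid C\sqcap C\mid\exists r.C$. An $\mathcal{L}$-GCI is $\langle C\sqsubseteq D:\kappa\rangle$,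 $\kappa\in\mathcal{L}$; an $\mathcal{L}$-TBox is a finite set of them; a KB is $\mathcal{K}=(\mathcal{R},\mathcal{T})$. A possible world $\mathcal{I}=(\Delta^{\mathcal{I}},\cdot^{\mathcal{I}},v^{\mathcal{I}})$ is a classical $\mathcal{ALC}$ interpretation together with $v^{\mathcal{I}}\in\mathrm{Int}(\mathcal{L})$; it models $\langle C\sqsubseteq D:\kappa\rangle$ iff $v^{\mathcal{I}}\not\models\kappa$ or $C^{\mathcal{I}}\subseteq D^{\mathcal{I}}$. For $w\in\mathrm{Int}(\mathcal{L})$, $\mathcal{T}_w=\{C\sqsubseteq D\mid\langle C\sqsubseteq D:\kappa\rangle\in\mathcal{T}, w\models\kappa\}$; $C$ is strongly non-subsumed by $D$ w.r.t. $\mathcal{T}_w$ iff $C^{\mathcal{I}}\not\subseteq D^{\mathcal{I}}$ in every classical interpretation satisfying all inclusions of $\mathcal{T}_w$. An $\mathcal{ALCP}$-interpretation $\mathcal{P}=(\mathfrak{I},P_{\mathfrak{I}})$ is a nonempty finite set of possible worlds with a probability distribution on it; $P^{\mathcal{P}}(v)=\sum_{\mathcal{I}\in\mathfrak{I},v^{\mathcal{I}}=v}P_{\mathfrak{I}}(\mathcal{I})$. $\mathcal{P}$ is an ME-$\mathcal{ALCP}$-model of $\mathcal{K}$ iff all its worlds model every GCI of $\mathcal{T}$ and $P^{\mathcal{P}}=P^{ME}_{\mathcal{R}}$; $\mathrm{Mod}_{ME}(\mathcal{K})$ is the set of these; $\mathcal{K}$ is ME-consistent iff it is nonempty. $\Pr_{\mathcal{P}}(C\sqsubseteq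 D\mid\kappa)=\big(\sum_{\mathcal{I}\in\mathfrak{I},v^{\mathcal{I}}\models\kappa,C^{\mathcal{I}}\subseteq D^{\mathcal{I}}}P_{\mathfrak{I}}(\mathcal{I})\big)/\big(\sum_{\mathcal{I}\in\mathfrak{I},v^{\mathcal{I}}\models\kappa}P_{\mathfrak{I}}(\mathcal{I})\big)$. The credulous degree of belief is $\mathcal{B}^{c}_{\mathcal{K}}(C\sqsubseteq D\mid\kappa)=\sup_{\mathcal{P}\in\mathrm{Mod}_{ME}(\mathcal{K})}\Pr_{\mathcal{P}}(C\sqsubseteq D\mid\kappa)$. *)

From HB Require Import structures.
From mathcomp Require Import all_boot all_order all_algebra.
From mathcomp Require Import boolp classical_sets reals exp.
From Stdlib Require List.
Unset Printing Implicit Defensive.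
Import Order.TTheory GRing.Theory Num.Theory.
Local Open Scope ring_scope.

Inductive pformula (n : nat) : Type :=
  | PTop : pformula n
  | PVar : 'I_n -> pformula n
  | PNeg : pformula n -> pformula n
  | PAnd : pformula n -> pformula n -> pformula n
  | POr  : pformula n -> pformula n -> pformula n.

Definition Int (n : nat) := {ffun 'I_n -> bool}.

Arguments PTop {n}. Arguments PVar {n}. Arguments PNeg {n}. Arguments PAnd {n}. Arguments POr {n}.

Fixpoint psat {n} (v : Int n) (f : pformula n) : bool :=
  match f with
  | PTop => true
  | PVar i => v i
  | PNeg g => ~~ psat v g
  | PAnd g h => psat v g && psat v h
  | POr g h => psat v g || psat v h
  end.

Section Prob.
Variables (R : realType) (n : nat).

Definition is_distr (P : {ffun Int n -> R}) : Prop :=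
  (forall v, 0 <= P v) /\ \sum_(v : Int n) P v = 1.

Definition probf (P : {ffun Int n -> R}) (phi : pformula n) : R :=
  \sum_(v : Int n | psat v phi) P v.

Record pconstr := PConstr { pc0 : R ; pcs : seq (R * pformula n) }.

Definition satc (P : {ffun Int n -> R}) (c : pconstr) : Prop :=
  0 <= pc0 c + \sum_(x <- pcs c) x.1 * probf P x.2.

Definition ModR (Rc : seq pconstr) (P : {ffun Int n -> R}) : Prop :=
  is_distr P /\ forall c, List.In c Rc -> satc P c.

Definition consistent (Rc : seq pconstr) : Prop := exists P, ModR Rc P.

(* entropy H(P) = - sum_v P(v) log P(v)   (0 log 0 = 0 since 0 * _ = 0) *)
Definition entropy (P : {ffun Int n -> R}) : R :=
  - \sum_(v : Int n) P v * ln (P v).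

Definition is_ME (Rc : seq pconstr) (P : {ffun Int n -> R}) : Prop :=
  ModR Rc P /\ forall Q, ModR Rc Q -> entropy Q <= entropy P.

(* P^ME_R: the (unique, for consistent R) maximizer of entropy in Mod(R) *)
Definition PME (Rc : seq pconstr) : {ffun Int n -> R} :=
  xget 0 [set P | is_ME Rc P].

End Prob.
Arguments is_distr {R n}. Arguments probf {R n}. Arguments PConstr {R n}.
Arguments pc0 {R n}. Arguments pcs {R n}. Arguments satc {R n}. Arguments ModR {R n}.
Arguments consistent {R n}. Arguments entropy {R n}. Arguments is_ME {R n}. Arguments PME {R n}.

Inductive concept : Type :=
  | CAtom : nat -> concept
  | CNeg : concept -> concept
  | CAnd : concept -> concept -> concept
  | CEx : nat -> concept -> concept.

Record alc_interp := ALCInterp {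
  dom : Type ;
  dom_inh : dom ;
  cint : nat -> dom -> Prop ;
  rint : nat -> dom -> dom -> Prop }.

Fixpoint cext (I : alc_interp) (C : concept) : dom I -> Prop :=
  match C with
  | CAtom a => cint I a
  | CNeg C' => fun x => ~ cext I C' x
  | CAnd C1 C2 => fun x => cext I C1 x /\ cext I C2 x
  | CEx r C' => fun x => exists y, rint I r x y /\ cext I C' y
  end.

Definition csub (I : alc_interp) (C D : concept) : Prop :=
  forall x, cext I C x -> cext I D x.

Record gci (n : nat) := GCI { gC : concept ; gD : concept ; gk : pformula n }.
Arguments GCI {n}. Arguments gC {n}. Arguments gD {n}. Arguments gk {n}.

Definition Tw {n} (T : seq (gci n)) (w : Int n) : seq (concept * concept) :=
  [seq (gC g, gD g) | g <- T & psat w (gk g)].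

Definition models_tbox (I : alc_interp) (T0 : seq (concept * concept)) : Prop :=
  forall p, List.In p T0 -> csub I p.1 p.2.

Definition strongly_nonsub {n} (T : seq (gci n)) (w : Int n) (C D : concept) : Prop :=
  forall I : alc_interp, models_tbox I (Tw T w) -> ~ csub I C D.

Record pworld (n : nat) := PWorld { wI : alc_interp ; wv : Int n }.
Arguments PWorld {n}. Arguments wI {n}. Arguments wv {n}.

Definition pworld_models {n} (W : pworld n) (g : gci n) : Prop :=
  ~~ psat (wv W) (gk g) \/ csub (wI W) (gC g) (gD g).

(* a nonempty finite set of possible worlds (indexed injectively by 'I_m)
   with a probability distribution on it *)
Record alcp_interp (R : realType) (n : nat) := ALCPInterp {
  nworlds : nat ;
  world : 'I_nworlds -> pworld n ;
  world_inj : injective world ;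
  wprob : 'I_nworlds -> R ;
  wprob_ge0 : forall i, 0 <= wprob i ;
  wprob_sum1 : \sum_(i < nworlds) wprob i = 1 }.
Arguments nworlds {R n}. Arguments world {R n}. Arguments world_inj {R n}.
Arguments wprob {R n}. Arguments wprob_ge0 {R n}. Arguments wprob_sum1 {R n}.

Section ALCP.
Variables (R : realType) (n : nat).

Definition marg (Pi : alcp_interp R n) : {ffun Int n -> R} :=
  [ffun v => \sum_(i < nworlds Pi | wv (world Pi i) == v) wprob Pi i].

Record KB := MkKB { kbR : seq (pconstr R n) ; kbT : seq (gci n) }.

Definition ME_model (K : KB) (Pi : alcp_interp R n) : Prop :=
  (forall i g, List.In g (kbT K) -> pworld_models (world Pi i) g) /\
  marg Pi = PME (kbR K).

(* K is ME-consistent: R is consistent (so P^ME_R is defined) and Mod_ME(K) is nonempty *)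
Definition ME_consistent (K : KB) : Prop :=
  consistent (kbR K) /\ exists Pi, ME_model K Pi.

Definition Pr (Pi : alcp_interp R n) (C D : concept) (k : pformula n) : R :=
  (\sum_(i < nworlds Pi | psat (wv (world Pi i)) k && `[< csub (wI (world Pi i)) C D >])
      wprob Pi i)
  / (\sum_(i < nworlds Pi | psat (wv (world Pi i)) k) wprob Pi i).

Definition Bc (K : KB) (C D : concept) (k : pformula n) : R :=
  sup [set x | exists Pi, ME_model K Pi /\ x = Pr Pi C D k].

End ALCP.
Arguments marg {R n}. Arguments MkKB {R n}. Arguments kbR {R n}. Arguments kbT {R n}.
Arguments ME_model {R n}. Arguments ME_consistent {R n}. Arguments Pr {R n}. Arguments Bc {R n}.

From HB Require Import structures.
From mathcomp Require Import all_boot all_order all_algebra.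
From mathcomp Require Import boolp classical_sets reals exp.
Import Order.TTheory GRing.Theory Num.Theory.
Local Open Scope ring_scope.

(* In a possible world whose valuation w satisfies kappa and whose
   interpretation models T_w, the subsumption C [= D must fail whenever C is
   strongly non-subsumed by D w.r.t. T_w; so in every ME-model the worlds
   violating C [= D carry at least the ME-mass of those w, which bounds
   Pr(C [= D | kappa) from above by the right-hand side.  The bound is
   attained by the model having one world per w with P^ME(w) > 0, whose
   interpretation models T_w and satisfies C [= D whenever some model of T_w
   does; T_w has a model for such w because some world of an existing
   ME-model has valuation w.  The supremum is therefore a maximum. *)

Lemma in_Tw {n} (T : seq (gci n)) w p :
  List.In p (Tw T w) <->
  exists g, [/\ List.In g T, psat w (gk g) & p = (gC g, gD g)].
Proof.
rewrite /Tw; elim: T => [|g T IH] /=; first by split=> // -[g []].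
case: ifP => Hg /=; split.
- case=> [<-|/IH [g' [Tg' wg' ->]]]; first by exists g; split=> //; left.
  by exists g'; split=> //; right.
- case=> g' [[<-|Tg'] wg' Ep]; [by left; rewrite Ep | by right; apply/IH; exists g'].
- by move=> /IH [g' [Tg' wg' ->]]; exists g'; split=> //; right.
- case=> g' [[<-|Tg'] wg' Ep]; first by rewrite wg' in Hg.
  by apply/IH; exists g'.
Qed.

Lemma models_TwP {n} (T : seq (gci n)) (I : alc_interp) (w : Int n) :
  models_tbox I (Tw T w) <->
  forall g, List.In g T -> pworld_models (PWorld I w) g.
Proof.
split=> [HI g Tg | HT p /in_Tw [g [Tg wg ->]]].
  rewrite /pworld_models /=; case wg: (psat w (gk g)); [right | by left].
  by apply: (HI (gC g, gD g)); apply/in_Tw; exists g.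
by case: (HT g Tg) => //=; rewrite wg.
Qed.

Lemma sup_max {R : realType} (E : set R) (x : R) :
  E x -> ubound E x -> sup E = x.
Proof.
move=> Ex ubx; apply/le_anti; rewrite ge_sup //=; last by exists x.
by apply: sup_upper_bound => //; split; exists x.
Qed.

Definition pick_such {T : Type} (P : T -> Prop) (x0 : T) : T :=
  if pselect (exists x, P x) is left h then proj1_sig (cid h) else x0.

Lemma pick_suchP {T : Type} (P : T -> Prop) (x0 : T) :
  (exists x, P x) -> P (pick_such P x0).
Proof. by rewrite /pick_such; case: pselect => // h _; case: (cid h). Qed.

Lemma pick_such_dflt {T : Type} (P : T -> Prop) (x0 : T) :
  P (pick_such P x0) \/ pick_such P x0 = x0.
Proof. by rewrite /pick_such; case: pselect => [h|_]; [left; case: (cid h) | right]. Qed.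

Section Marginal.
Context {R : realType} {n : nat}.
Implicit Types (Pi : alcp_interp R n) (C D : concept) (k : pformula n).

Lemma sum_marg Pi (Q : pred (Int n)) :
  \sum_(i | Q (wv (world Pi i))) wprob Pi i = \sum_(v | Q v) marg Pi v.
Proof.
rewrite (partition_big (fun i => wv (world Pi i)) Q) //=.
apply: eq_bigr => v Qv; rewrite ffunE; apply: eq_bigl => i.
by case: eqP => [->|]; rewrite ?Qv ?andbF ?andbT.
Qed.

Lemma marg_distr Pi : is_distr (marg Pi).
Proof.
split; first by move=> v; rewrite ffunE; apply: sumr_ge0 => i _; apply: wprob_ge0.
by rewrite -(wprob_sum1 Pi) -(sum_marg Pi predT).
Qed.

Lemma marg_gt0_world Pi v : 0 < marg Pi v -> exists i, wv (world Pi i) = v.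
Proof.
rewrite ffunE; apply: contraPP => /forallNP Nv.
by rewrite big_pred0 ?ltxx // => i; apply/eqP/Nv.
Qed.

Definition Prnum Pi C D k : R :=
  \sum_(i | psat (wv (world Pi i)) k && `[< csub (wI (world Pi i)) C D >])
    wprob Pi i.

Lemma PrE Pi C D k : Pr Pi C D k = Prnum Pi C D k / probf (marg Pi) k.
Proof. by rewrite /Pr (sum_marg Pi (psat^~ k)). Qed.

Lemma Prnum_add_nonsub_le Pi (T : seq (gci n)) C D k :
  (forall i g, List.In g T -> pworld_models (world Pi i) g) ->
  Prnum Pi C D k + \sum_(w | `[< strongly_nonsub T w C D >] && psat w k) marg Pi w
  <= probf (marg Pi) k.
Proof.
move=> HT; rewrite /probf -!sum_marg /Prnum.
rewrite [leRHS](bigID (fun i => `[< csub (wI (world Pi i)) C D >])) /= lerD2l.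
rewrite [leRHS]big_mkcond [leLHS]big_mkcond /=; apply: ler_sum => i _.
case: asboolP => [nsub|_]; last by case: ifP => // _; apply: wprob_ge0.
case: psat => //=; rewrite asboolF //; apply: nsub.
by case: (world Pi i) (HT i) => I v /= /models_TwP.
Qed.

End Marginal.

Section DistrModel.
Context {R : realType} {n : nat}.
Variable P : {ffun Int n -> R}.
Hypothesis P_distr : is_distr P.
Variable J : Int n -> alc_interp.

Definition support : pred (Int n) := fun w => 0 < P w.

Lemma sum_support (Q : pred (Int n)) :
  \sum_(j < #|support| | Q (enum_val j)) P (enum_val j) = \sum_(w | Q w) P w.
Proof.
rewrite -(big_enum_val_cond Q P) [RHS](bigID (mem support)) /=.
rewrite [X in _ = _ + X]big1 ?addr0; last first.
  move=> w /andP[_]; rewrite -topredE /= /support -leNgt => Pw_le0.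
  by apply/le_anti; rewrite Pw_le0 (proj1 P_distr).
by apply: eq_bigl => w; rewrite andbC.
Qed.

Definition alcp_of_distr : alcp_interp R n.
Proof.
refine (@ALCPInterp R n #|support|
  (fun j => PWorld (J (enum_val j)) (enum_val j)) _
  (fun j => P (enum_val j)) (fun j => proj1 P_distr _) _).
- by move=> i j /(congr1 wv) /= /enum_val_inj.
- by rewrite (sum_support predT) (proj2 P_distr).
Defined.

Lemma marg_alcp_of_distr : marg alcp_of_distr = P.
Proof.
apply/ffunP => v; rewrite ffunE /=.
by rewrite (sum_support (pred1 v)) big_pred1_eq.
Qed.

Lemma alcp_of_distr_models (T : seq (gci n)) :
  (forall w, support w -> models_tbox (J w) (Tw T w)) ->
  forall i g, List.In g T -> pworld_models (world alcp_of_distr i) g.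
Proof. by move=> HJ i; apply/models_TwP/HJ/(enum_valP i). Qed.

Lemma le_Prnum_alcp_of_distr (T : seq (gci n)) C D k :
  (forall w, psat w k -> ~ strongly_nonsub T w C D -> csub (J w) C D) ->
  probf P k <=
  Prnum alcp_of_distr C D k
  + \sum_(w | `[< strongly_nonsub T w C D >] && psat w k) P w.
Proof.
move=> HJ; rewrite /Prnum /= (sum_support (fun w => psat w k && `[< csub (J w) C D >])).
rewrite [X in _ + X](eq_bigl (fun w => psat w k && `[< strongly_nonsub T w C D >])).
  2: by move=> w; rewrite andbC.
rewrite /probf (bigID (fun w => `[< strongly_nonsub T w C D >])) /= addrC lerD2r.
rewrite [leLHS]big_mkcond [leRHS]big_mkcond /=; apply: ler_sum => w _.
case kw: (psat w k) => //=; case: asboolP => [_|sub].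
  by case: ifP => // _; apply: (proj1 P_distr).
by rewrite asboolT //; apply: HJ.
Qed.

End DistrModel.

Definition empty_interp : alc_interp :=
  ALCInterp unit tt (fun _ _ => False) (fun _ _ _ => False).

Definition best_interp {n} (T : seq (gci n)) (w : Int n) (C D : concept) :=
  pick_such (fun I => models_tbox I (Tw T w) /\ csub I C D)
    (pick_such (fun I => models_tbox I (Tw T w)) empty_interp).

Lemma best_interp_models {n} (T : seq (gci n)) w C D :
  (exists I, models_tbox I (Tw T w)) -> models_tbox (best_interp T w C D) (Tw T w).
Proof.
move=> hasI; rewrite /best_interp.
set I0 := pick_such _ empty_interp.
case: (pick_such_dflt (fun I => models_tbox I (Tw T w) /\ csub I C D) I0) => [[]|->] //.
exact: (pick_suchP (fun I => models_tbox I (Tw T w))).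
Qed.

Lemma best_interp_csub {n} (T : seq (gci n)) w C D :
  ~ strongly_nonsub T w C D -> csub (best_interp T w C D) C D.
Proof.
move=> /existsNP [I /not_implyP [TI /contrapT sub]].
rewrite /best_interp; set I0 := pick_such _ empty_interp.
by case: (pick_suchP (fun I => models_tbox I (Tw T w) /\ csub I C D) I0
  (ex_intro _ I (conj TI sub))).
Qed.

Theorem theorem4 (R : realType) (n : nat) (K : KB R n) (C D : concept)
  (k : pformula n) :
  ME_consistent K ->
  0 < probf (PME (kbR K)) k ->
  Bc K C D k =
  1 - (\sum_(w : Int n | `[< strongly_nonsub (kbT K) w C D >] && psat w k)
          PME (kbR K) w) / probf (PME (kbR K)) k.
Proof.
move=> [_ [Pi0 [T_Pi0 marg_Pi0]]] Pk_gt0.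
set T := kbT K; set P := PME (kbR K).
set S := \sum_(w | `[< strongly_nonsub T w C D >] && psat w k) P w.
have P_distr : is_distr P by rewrite /P -marg_Pi0; apply: marg_distr.
pose Pi1 := alcp_of_distr P P_distr (fun w => best_interp T w C D).
have ME_Pi1 : ME_model K Pi1.
  split; last exact: marg_alcp_of_distr.
  apply: alcp_of_distr_models => w; rewrite /support /P -marg_Pi0.
  move=> /marg_gt0_world [i <-]; apply: best_interp_models.
  by exists (wI (world Pi0 i)); case: (world Pi0 i) (T_Pi0 i) => I v /models_TwP.
have Pr_le Pi : ME_model K Pi -> Pr Pi C D k <= (probf P k - S) / probf P k.
  move=> [T_Pi marg_Pi].
  have := @Prnum_add_nonsub_le _ _ Pi T C D k T_Pi; rewrite marg_Pi -/P -/S.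
  by rewrite PrE marg_Pi ler_pM2r ?invr_gt0 // lerBrDr.
have Pr_Pi1 : Pr Pi1 C D k = (probf P k - S) / probf P k.
  apply/le_anti; rewrite Pr_le //= PrE marg_alcp_of_distr ler_pM2r ?invr_gt0 //.
  rewrite lerBlDr; apply: le_Prnum_alcp_of_distr => w _; exact: best_interp_csub.
rewrite /Bc (@sup_max _ _ ((probf P k - S) / probf P k)).
- by rewrite mulrBl divff ?gt_eqF.
- by exists Pi1; split; last rewrite Pr_Pi1.
- by move=> _ [Pi [ME_Pi ->]]; apply: Pr_le.
Qed.
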